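(* Let $0\to M\xrightarrow{i}\Lambda\xrightarrow{d}B\to0$ be an exact sequence of lattices, $P\subset\Lambda_\mathbb{Q}$ a polyhedron, and $F\subset P$ an $M$-stable face. Then the map $i^*:\Lambda^\vee_\mathbb{Q}\to M^\vee_\mathbb{Q}$ restricts to a bijection $i^*_F:N_FP\to N_{F_M}P_M$.
   Context: Notation: $P_M=P\cap M_\mathbb{Q}$, $F_M=F\cap M_\mathbb{Q}$ (identifying $M$ with $i(M)$). For $y\in\Lambda^\vee_\mathbb{Q}$, $\mathrm{face}_y(P)=\{x\in P:\langle x,y\rangle=\min_P\langle-,y\rangle\}$; faces are the nonempty sets of this form; $N_FP=\{y\in\Lambda^\vee_\mathbb{Q}:\mathrm{face}_y(P)\supset F\}$, and analogously $N_{F_M}P_M\subset M^\vee_\mathbb{Q}$ for the face $F_M$ of $P_M$. $\langle F\rangle$ is the span of the differences of elements of $F$; $F$ is $M$-stable if the relative interior of $F$ meets $M_\mathbb{Q}$ and $\langle F\rangle+M_\mathbb{Q}=\Lambda_\mathbb{Q}$. *)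

(* Lattices are modelled as Z^r (row vectors of int),
   their rationalizations as row vectors over rat. Duals are row vectors
   with the standard pairing. *)
From HB Require Import structures.
From mathcomp Require Import all_boot all_order all_algebra.
Set Implicit Arguments. Unset Strict Implicit. Unset Printing Implicit Defensive.
Import Order.TTheory GRing.Theory Num.Theory.
Local Open Scope ring_scope.

Definition short_exact (m n k : nat) (i : 'M[int]_(m, n)) (d : 'M[int]_(n, k)) : Prop :=
  [/\ (forall u : 'rV[int]_m, u *m i = 0 -> u = 0),
      (forall x : 'rV[int]_n, x *m d = 0 <-> exists u : 'rV[int]_m, x = u *m i)
    & (forall b : 'rV[int]_k, exists x : 'rV[int]_n, x *m d = b)].

Definition ratmx (m n : nat) (i : 'M[int]_(m, n)) : 'M[rat]_(m, n) :=
  map_mx (fun z : int => z%:~R) i.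

Definition pair (n : nat) (x y : 'rV[rat]_n) : rat := (x *m y^T) 0 0.

(* the dual map i^* : Lambda^vee_Q -> M^vee_Q, characterized by
   pair u (i^* y) = pair (i u) y *)
Definition dualmap (m n : nat) (I : 'M[rat]_(m, n)) (y : 'rV[rat]_n) : 'rV[rat]_m :=
  y *m I^T.

Definition polyhedron (n : nat) (P : 'rV[rat]_n -> Prop) : Prop :=
  exists (p : nat) (A : 'M[rat]_(n, p)) (b : 'rV[rat]_p),
    forall x, P x <-> (forall j, b 0 j <= (x *m A) 0 j).

Definition face_y (n : nat) (P : 'rV[rat]_n -> Prop) (y : 'rV[rat]_n) : 'rV[rat]_n -> Prop :=
  fun x => P x /\ forall z, P z -> pair x y <= pair z y.

Definition is_face (n : nat) (P F : 'rV[rat]_n -> Prop) : Prop :=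
  (exists x, F x) /\ exists y, forall x, F x <-> face_y P y x.

Definition normal_cone (n : nat) (P F : 'rV[rat]_n -> Prop) : 'rV[rat]_n -> Prop :=
  fun y => forall x, F x -> face_y P y x.

(* restriction to M_Q, identifying M_Q with its image under i *)
Definition restrict (m n : nat) (I : 'M[rat]_(m, n)) (S : 'rV[rat]_n -> Prop) : 'rV[rat]_m -> Prop :=
  fun u => S (u *m I).

Definition diff_span (n : nat) (F : 'rV[rat]_n -> Prop) : 'rV[rat]_n -> Prop :=
  fun v => exists (r : nat) (c : 'I_r -> rat) (a b : 'I_r -> 'rV[rat]_n),
    (forall j, F (a j) /\ F (b j)) /\ v = \sum_(j < r) c j *: (a j - b j).

Definition relint (n : nat) (F : 'rV[rat]_n -> Prop) : 'rV[rat]_n -> Prop :=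
  fun x => F x /\ exists e : rat, 0 < e /\
    forall v, diff_span F v -> (forall j, `|v 0 j| < e) -> F (x + v).

Definition M_stable (m n : nat) (I : 'M[rat]_(m, n)) (F : 'rV[rat]_n -> Prop) : Prop :=
  (exists u : 'rV[rat]_m, relint F (u *m I)) /\
  (forall w : 'rV[rat]_n, exists v u, diff_span F v /\ w = v + u *m I).

(* A normal vector y of P at F is constant on F, hence orthogonal to <F>; since
   <F> + M_Q = Lambda_Q, it is determined by its restriction to M_Q, which gives
   injectivity. Conversely, let z be normal to P_M at F_M and x0 a point of M_Q in
   the relative interior of F. Moving from x0 in both directions along a vector of
   <F> /\ M_Q stays in F_M, so z vanishes on <F> /\ M_Q and therefore extends to a
   functional y on Lambda_Q = <F> + M_Q vanishing on <F>. To see that y is normal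
   at F, take p in P and write p - x0 = v + u with v in <F>, u in M_Q: the midpoint
   of a point of [x0, p] near x0 and of x0 - s v in F lies in P_M and equals
   x0 + (s/2) u, so minimality of z at x0 gives <u, z> >= 0. *)
From mathcomp Require Import all_boot all_order all_algebra.
From mathcomp Require Import ring lra.
Import Order.TTheory GRing.Theory Num.Theory.
Local Open Scope ring_scope.
Set Implicit Arguments. Unset Strict Implicit.

Section Pairing.
Variable n : nat.
Implicit Types x y w : 'rV[rat]_n.

Lemma pairDl x x' y : pair (x + x') y = pair x y + pair x' y.
Proof. by rewrite /pair mulmxDl mxE. Qed.

Lemma pairZl c x y : pair (c *: x) y = c * pair x y.
Proof. by rewrite /pair -scalemxAl mxE. Qed.

Lemma pairBl x x' y : pair (x - x') y = pair x y - pair x' y.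
Proof. by rewrite /pair mulmxBl !mxE. Qed.

Lemma pair_inj y1 y2 : (forall w, pair w y1 = pair w y2) -> y1 = y2.
Proof.
move=> eq_y; apply/rowP => j.
by move: (eq_y (delta_mx 0 j)); rewrite /pair -!rowE !mxE.
Qed.

End Pairing.

Lemma pair_dualmap m n (I : 'M[rat]_(m, n)) u y :
  pair u (dualmap I y) = pair (u *m I) y.
Proof. by rewrite /pair /dualmap trmx_mul trmxK mulmxA. Qed.

Section DiffSpan.
Variables (n : nat) (F : 'rV[rat]_n -> Prop).

Lemma diff_span0 : diff_span F 0.
Proof.
exists 0%N, (fun _ => 0), (fun _ => 0), (fun _ => 0); split; first by case.
by rewrite big_ord0.
Qed.

Lemma diff_spanZ c v : diff_span F v -> diff_span F (c *: v).
Proof.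
move=> [r [cv [a [b [Fab ->]]]]]; exists r, (fun j => c * cv j), a, b; split=> //.
by rewrite scaler_sumr; apply: eq_bigr => j _; rewrite scalerA.
Qed.

Lemma diff_spanN v : diff_span F v -> diff_span F (- v).
Proof. by rewrite -scaleN1r; apply: diff_spanZ. Qed.

Lemma diff_spanD v w : diff_span F v -> diff_span F w -> diff_span F (v + w).
Proof.
move=> [r1 [c1 [a1 [b1 [F1 ->]]]]] [r2 [c2 [a2 [b2 [F2 ->]]]]].
pose glue T (f1 : 'I_r1 -> T) (f2 : 'I_r2 -> T) (j : 'I_(r1 + r2)) :=
  match split j with inl j1 => f1 j1 | inr j2 => f2 j2 end.
exists (r1 + r2)%N, (glue _ c1 c2), (glue _ a1 a2), (glue _ b1 b2); split.
  by move=> j; rewrite /glue; case: (split j).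
rewrite big_split_ord /=; congr (_ + _); apply: eq_bigr => j _; rewrite /glue.
  by rewrite (unsplitK (inl j) : split (lshift r2 j) = inl j).
by rewrite (unsplitK (inr j) : split (rshift r1 j) = inr j).
Qed.

Lemma diff_spanB v w : diff_span F v -> diff_span F w -> diff_span F (v - w).
Proof. by move=> Fv /diff_spanN; apply: diff_spanD. Qed.

Lemma diff_span_sub x x' : F x -> F x' -> diff_span F (x - x').
Proof.
move=> Fx Fx'; exists 1%N, (fun _ => 1), (fun _ => x), (fun _ => x'); split=> //.
by rewrite big_ord1 scale1r.
Qed.

Lemma diff_span_sum r (f : 'I_r -> 'rV[rat]_n) :
  (forall j, diff_span F (f j)) -> diff_span F (\sum_j f j).
Proof.
by move=> Ff; apply: (big_ind (diff_span F)) => //; [exact: diff_span0 | exact: diff_spanD].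
Qed.

Lemma exists_small_multiple (e : rat) (v : 'rV[rat]_n) : 0 < e ->
  exists s : rat, [/\ 0 < s, s <= 1 & forall j, `|(s *: v) 0 j| < e].
Proof.
move=> e_gt0; set S := \sum_j `|v 0 j|.
have S_ge0 : 0 <= S by apply: sumr_ge0.
have den_gt0 : 0 < e + 1 + S by lra.
exists (e / (e + 1 + S)); split.
- by rewrite divr_gt0.
- by rewrite ler_pdivrMr // mul1r; lra.
- move=> j; rewrite mxE normrM gtr0_norm ?divr_gt0 //.
  have vS : `|v 0 j| <= S by rewrite /S (bigD1 j) //= lerDl; exact: sumr_ge0.
  by rewrite -mulrA mulrC gtr_pMl // mulrC ltr_pdivrMr // mul1r; lra.
Qed.

Lemma relint_step x v : relint F x -> diff_span F v ->
  exists s : rat, [/\ 0 < s, s <= 1 & F (x + s *: v)].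
Proof.
move=> [_ [e [e_gt0 Fball]]] Fv.
have [s [s_gt0 s_le1 small]] := exists_small_multiple v e_gt0.
by exists s; split=> //; apply: Fball => //; apply: diff_spanZ.
Qed.

Lemma normal_cone_orthogonal (P : 'rV[rat]_n -> Prop) y v :
  normal_cone P F y -> diff_span F v -> pair v y = 0.
Proof.
move=> Ny [r [c [a [b [Fab ->]]]]].
rewrite /pair mulmx_suml summxE big1 // => j _.
rewrite -scalemxAl mxE -/(pair _ _) pairBl.
have [/Ny [Pa min_a] /Ny [Pb min_b]] := Fab j.
have -> : pair (a j) y = pair (b j) y by apply/eqP; rewrite eq_le min_a ?min_b.
by rewrite subrr mulr0.
Qed.

End DiffSpan.

Lemma polyhedron_convex n (P : 'rV[rat]_n -> Prop) a b t :
  polyhedron P -> P a -> P b -> 0 <= t -> t <= 1 -> P ((1 - t) *: a + t *: b).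
Proof.
move=> [p [A [c defP]]] /defP Pa /defP Pb t_ge0 t_le1; apply/defP => j.
rewrite mulmxDl -!scalemxAl mxE [X in _ <= X + _]mxE [X in _ <= _ + X]mxE.
by have := Pa j; have := Pb j; nra.
Qed.

Section Restriction.
Variables (m n : nat) (I : 'M[rat]_(m, n)) (P F : 'rV[rat]_n -> Prop).
Hypothesis F_span : forall w, exists v u, diff_span F v /\ w = v + u *m I.

Lemma dualmap_normal_cone y :
  normal_cone P F y -> normal_cone (restrict I P) (restrict I F) (dualmap I y).
Proof.
move=> Ny u /Ny [Pu min_u]; split=> // u' Pu'.
by rewrite !pair_dualmap; apply: min_u.
Qed.

Lemma dualmap_normal_cone_inj y1 y2 : normal_cone P F y1 -> normal_cone P F y2 ->
  dualmap I y1 = dualmap I y2 -> y1 = y2.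
Proof.
move=> N1 N2 eq_dual; apply: pair_inj => w; have [v [u [Fv ->]]] := F_span w.
rewrite !pairDl (normal_cone_orthogonal N1 Fv) (normal_cone_orthogonal N2 Fv).
by rewrite -!pair_dualmap eq_dual.
Qed.

Lemma exists_lift z : (forall u, diff_span F (u *m I) -> pair u z = 0) ->
  exists y, forall v u, diff_span F v -> pair (v + u *m I) y = pair u z.
Proof.
move=> z_orth.
have [vs /fin_all_exists [us decomp]] :=
  fin_all_exists (fun j : 'I_n => F_span (delta_mx 0 j)).
pose V := \matrix_j vs j; pose U := \matrix_j us j.
have decomp1 : 1%:M = V + U *m I.
  apply/row_matrixP => j; rewrite row1 linearD /= row_mul !rowK.
  by have [_ ->] := decomp j.
have FV w : diff_span F (w *m V).
  rewrite mulmx_sum_row; apply: diff_span_sum => j; rewrite rowK.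
  by apply: diff_spanZ; have [] := decomp j.
exists (z *m U^T) => v u Fv.
rewrite [LHS]/pair trmx_mul trmxK mulmxA -/(pair _ _); set w := v + u *m I.
have : diff_span F ((u - w *m U) *m I).
  have -> : (u - w *m U) *m I = w *m V - v.
    have w_decomp : w = w *m V + w *m U *m I by rewrite -mulmxA -mulmxDr -decomp1 mulmx1.
    have -> : w *m V = w - w *m U *m I by rewrite {2}w_decomp addrK.
    by rewrite mulmxBl /w addrAC [v + _]addrC addrK.
  exact: diff_spanB.
by move/z_orth; rewrite pairBl => /eqP; rewrite subr_eq0 => /eqP ->.
Qed.

Hypotheses (P_poly : polyhedron P) (F_sub_P : forall x, F x -> P x).
Variables (u0 z : 'rV[rat]_m).
Hypotheses (u0_relint : relint F (u0 *m I))
  (z_normal : normal_cone (restrict I P) (restrict I F) z).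

Lemma restrict_normal_ge0 p v u :
  P p -> diff_span F v -> p = u0 *m I + (v + u *m I) -> 0 <= pair u z.
Proof.
move=> Pp Fv def_p.
have [s [s_gt0 s_le1 F_back]] := relint_step u0_relint (diff_spanN Fv).
have P_near := polyhedron_convex P_poly (F_sub_P u0_relint.1) Pp (ltW s_gt0) s_le1.
have P_mid := polyhedron_convex P_poly P_near (F_sub_P F_back)
  (_ : 0 <= 1 / 2) (_ : 1 / 2 <= 1).
have {P_mid} : restrict I P (u0 + (s / 2) *: u).
  rewrite /restrict mulmxDl -scalemxAl.
  suff <- : (1 - 1 / 2) *: ((1 - s) *: (u0 *m I) + s *: p) +
    1 / 2 *: (u0 *m I + s *: - v) = u0 *m I + (s / 2) *: (u *m I).
    by apply: P_mid; lra.
  by rewrite def_p; apply/rowP => j; rewrite !mxE; field.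
have [_ min_u0] := z_normal u0_relint.1.
move/min_u0; rewrite pairDl pairZl lerDl.
by rewrite pmulr_rge0 // divr_gt0.
Qed.

Lemma restrict_normal_orthogonal u : diff_span F (u *m I) -> pair u z = 0.
Proof.
have ge0 (u' : 'rV[rat]_m) : diff_span F (u' *m I) -> 0 <= pair u' z.
  move=> Fu'; have [s [s_gt0 _ Fs]] := relint_step u0_relint Fu'.
  have := restrict_normal_ge0 (F_sub_P Fs) (diff_span0 F) (u := s *: u').
  by rewrite add0r -scalemxAl pairZl pmulr_rge0 //; apply.
move=> Fu; apply/eqP; rewrite eq_le ge0 // andbT -oppr_ge0.
by rewrite -mulN1r -pairZl scaleN1r ge0 // mulNmx; apply: diff_spanN.
Qed.

Lemma lift_normal_cone y :
  (forall v u, diff_span F v -> pair (v + u *m I) y = pair u z) ->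
  normal_cone P F y.
Proof.
move=> lift x Fx; split; first exact: F_sub_P.
move=> p Pp; have [v [u [Fv def_p]]] := F_span (p - u0 *m I).
have -> : pair x y = pair u0 z.
  by rewrite -(lift (x - u0 *m I)) ?subrK //; apply: diff_span_sub u0_relint.1.
rewrite -[p](subrK (u0 *m I)) def_p -addrA -mulmxDl lift // pairDl lerDr.
by apply: (restrict_normal_ge0 Pp Fv); rewrite -def_p addrC subrK.
Qed.

End Restriction.

Unset Implicit Arguments. Set Strict Implicit.

Theorem mainTheorem5 (m n k : nat) (i : 'M[int]_(m, n)) (d : 'M[int]_(n, k))
  (P F : 'rV[rat]_n -> Prop) :
  short_exact i d ->
  polyhedron P ->
  is_face P F ->
  M_stable (ratmx i) F ->
  let I := ratmx i in
  [/\ (forall y, normal_cone P F y ->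
         normal_cone (restrict I P) (restrict I F) (dualmap I y)),
      (forall y1 y2, normal_cone P F y1 -> normal_cone P F y2 ->
         dualmap I y1 = dualmap I y2 -> y1 = y2)
    & (forall z, normal_cone (restrict I P) (restrict I F) z ->
         exists2 y, normal_cone P F y & dualmap I y = z)].
Proof.
move=> _ P_poly [_ [y0 defF]] [[u0 u0_relint] F_span] I; rewrite {}/I.
have F_sub_P x : F x -> P x by move=> /defF [].
split; [exact: dualmap_normal_cone | exact: dualmap_normal_cone_inj |].
move=> z z_normal.
have [y lift] := exists_lift F_span
  (restrict_normal_orthogonal P_poly F_sub_P u0_relint z_normal).
exists y; first exact: (lift_normal_cone (P := P) F_span P_poly F_sub_P u0_relint z_normal lift).
apply: pair_inj => u; rewrite pair_dualmap -[u *m _]add0r.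
exact: (lift 0 u (diff_span0 F)).
Qed.
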